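(* Let $f:\mathbb{R}^n\to\overline{\mathbb{R}}$ be a proper closed convex function with conjugate $f^*$, and let $K=\{(x,r)\in\mathbb{R}^n\times\mathbb{R} : x=0,\ r\ge 0\}$. The mapping $\Psi:2^{\mathbb{R}^{n+1}}\to 2^{\mathbb{R}^{n+1}}$ defined by $$\Psi(F^* ):=\bigcap_{(u,f^*(u))\in F^*}\{(x,f(x))\in\mathbb{R}^n\times\mathbb{R} : u\in\partial f(x)\}$$ is an inclusion reversing one-to-one mapping between the set of $K$-minimal exposed faces of $\operatorname{epi} f^*$ and the set of $K$-minimal exposed faces of $\operatorname{epi} f$. Its inverse mapping is given by $$\Psi^*(F):=\bigcap_{(x,f(x))\in F}\{(u,f^*(u))\in\mathbb{R}^n\times\mathbb{R} : u\in\partial f(x)\}.$$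
   Context: $\overline{\mathbb{R}}=\mathbb{R}\cup\{\pm\infty\}$; $f^*(u)=\sup_x(\langle x,u\rangle-f(x))$. An exposed face of a convex set $A$ is a set $A\cap H$ with $H$ a supporting hyperplane to $A$ (i.e. $A\cap H\neq\emptyset$ and $A$ lies in one closed half-space bounded by $H$). A point $p\in A$ is minimal with respect to $K$ if $(\{p\}-K\setminus(-K))\cap A=\emptyset$; a face is $K$-minimal if all its points are minimal with respect to $K$. *)

From HB Require Import structures.
From mathcomp Require Import all_boot all_order all_algebra.
From mathcomp Require Import all_classical all_reals all_analysis.
Set Implicit Arguments. Unset Strict Implicit. Unset Printing Implicit Defensive.
Import Order.TTheory GRing.Theory Num.Theory.
Import numFieldNormedType.Exports.
Local Open Scope classical_set_scope.
Local Open Scope ring_scope.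

Section Defs.
Variables (R : realType) (n : nat).

(* points of R^n are row vectors; points of R^(n+1) = R^n x R are pairs *)
Definition dotv (x u : 'rV[R]_n) : R := \sum_(i < n) x ord0 i * u ord0 i.

Definition epi (f : 'rV[R]_n -> \bar R) : set ('rV[R]_n * R) :=
  [set z | (f z.1 <= z.2%:E)%E].

Definition convex_set2 (A : set ('rV[R]_n * R)) : Prop :=
  forall a b t, A a -> A b -> 0 <= t <= 1 ->
    A (t *: a.1 + (1 - t) *: b.1, t * a.2 + (1 - t) * b.2).

Definition proper_fun (f : 'rV[R]_n -> \bar R) : Prop :=
  (forall x, f x != -oo%E) /\ (exists x, (f x < +oo)%E).

Definition convex_fun (f : 'rV[R]_n -> \bar R) : Prop := convex_set2 (epi f).
Definition closed_fun (f : 'rV[R]_n -> \bar R) : Prop := closed (epi f).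

Definition conj_fun (f : 'rV[R]_n -> \bar R) (u : 'rV[R]_n) : \bar R :=
  ereal_sup [set ((dotv x u)%:E - f x)%E | x in [set: 'rV[R]_n]].

Definition subdiff (f : 'rV[R]_n -> \bar R) (x u : 'rV[R]_n) : Prop :=
  f x \is a fin_num /\ forall y, (f x + (dotv u (y - x))%:E <= f y)%E.

Definition lin2 (a : 'rV[R]_n * R) (z : 'rV[R]_n * R) : R :=
  dotv a.1 z.1 + a.2 * z.2.

Definition supporting_hyperplane (A H : set ('rV[R]_n * R)) : Prop :=
  exists (a : 'rV[R]_n * R) (b : R), a != 0 /\
    H = [set z | lin2 a z = b] /\
    A `&` H !=set0 /\
    ((forall z, A z -> lin2 a z <= b) \/ (forall z, A z -> b <= lin2 a z)).

Definition exposed_face (A F : set ('rV[R]_n * R)) : Prop :=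
  exists H, supporting_hyperplane A H /\ F = A `&` H.

Definition coneK : set ('rV[R]_n * R) := [set z | z.1 = 0 /\ 0 <= z.2].

Definition minimal_wrt (K A : set ('rV[R]_n * R)) (p : 'rV[R]_n * R) : Prop :=
  A p /\
  [set p - k | k in K `\` [set - k | k in K]] `&` A = set0.

Definition K_minimal_face (K A F : set ('rV[R]_n * R)) : Prop :=
  forall p, F p -> minimal_wrt K A p.

Definition K_min_exposed_faces (A : set ('rV[R]_n * R)) : set (set ('rV[R]_n * R)) :=
  [set F | exposed_face A F /\ K_minimal_face coneK A F].

Definition Psi (f : 'rV[R]_n -> \bar R) (Fs : set ('rV[R]_n * R)) : set ('rV[R]_n * R) :=
  [set z | forall w, Fs w -> w.2%:E = conj_fun f w.1 ->
     z.2%:E = f z.1 /\ subdiff f z.1 w.1].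

Definition Psi_star (f : 'rV[R]_n -> \bar R) (F : set ('rV[R]_n * R)) : set ('rV[R]_n * R) :=
  [set w | forall z, F z -> z.2%:E = f z.1 ->
     w.2%:E = conj_fun f w.1 /\ subdiff f z.1 w.1].

End Defs.

From HB Require Import structures.
From mathcomp Require Import all_boot all_order all_algebra.
From mathcomp Require Import all_classical all_reals all_analysis.
From mathcomp Require Import ring lra.
Set Implicit Arguments. Unset Strict Implicit. Unset Printing Implicit Defensive.
Import Order.TTheory GRing.Theory Num.Theory.
Import numFieldNormedType.Exports.
Local Open Scope classical_set_scope.
Local Open Scope ring_scope.

(* Both families of faces are the contact sets of non-vertical supporting
   hyperplanes (K-minimality excludes vertical ones).  For [epi f] these are
   the sets [{(x, f x) | u \in \partial f(x)}] with a fixed slope [u]; for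
   [epi f^*], by the Fenchel-Young equality and [f^** = f] (a separation
   argument, which is where closedness and convexity enter), they are the sets
   [{(u, f^* u) | u \in \partial f(x0)}] with a fixed [x0].  The set
   [\partial f(x0)], and the set of points at which [u] is a subgradient, are
   convex; at a relative interior point the subgradient inequality is tight
   on the whole set, so each intersection defining [Psi] or [Psi^*] collapses
   to a single face of the other kind, and the two maps are inverse to each
   other. *)

Section InnerProduct.
Variables (R : realType) (n : nat).
Implicit Types (x u v : 'rV[R]_n) (a z w : 'rV[R]_n * R).

Lemma dotvC x u : dotv x u = dotv u x.
Proof. by apply: eq_bigr => i _; rewrite mulrC. Qed.

Lemma dotvDr x u v : dotv x (u + v) = dotv x u + dotv x v.
Proof. by rewrite /dotv -big_split; apply: eq_bigr => i _; rewrite mxE mulrDr. Qed.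

Lemma dotvZr x u t : dotv x (t *: u) = t * dotv x u.
Proof. by rewrite /dotv mulr_sumr; apply: eq_bigr => i _; rewrite mxE mulrCA. Qed.

Lemma dotvNr x u : dotv x (- u) = - dotv x u.
Proof. by rewrite /dotv -sumrN; apply: eq_bigr => i _; rewrite mxE mulrN. Qed.

Lemma dotv0r x : dotv x 0 = 0.
Proof. by rewrite /dotv big1 // => i _; rewrite mxE mulr0. Qed.

Lemma dotvBr x u v : dotv x (u - v) = dotv x u - dotv x v.
Proof. by rewrite dotvDr dotvNr. Qed.

Lemma dotvDl x u v : dotv (u + v) x = dotv u x + dotv v x.
Proof. by rewrite dotvC dotvDr !(dotvC x). Qed.

Lemma dotvZl x u t : dotv (t *: u) x = t * dotv u x.
Proof. by rewrite dotvC dotvZr dotvC. Qed.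

Lemma dotvBl x u v : dotv (u - v) x = dotv u x - dotv v x.
Proof. by rewrite dotvC dotvBr !(dotvC x). Qed.

Lemma dotv_sumr x (I : finType) (F : I -> 'rV[R]_n) :
  dotv x (\sum_i F i) = \sum_i dotv x (F i).
Proof. exact: (big_morph _ (dotvDr x) (dotv0r x)). Qed.

Lemma dotv_ge0 x : 0 <= dotv x x.
Proof. by apply: sumr_ge0 => i _; rewrite -expr2 sqr_ge0. Qed.

Lemma dotv_eq0 x : dotv x x = 0 -> x = 0.
Proof.
move=> /eqP; rewrite psumr_eq0 => [/allP x0|i _]; last by rewrite -expr2 sqr_ge0.
apply/rowP => i; rewrite mxE; apply/eqP; rewrite -sqrf_eq0 expr2.
exact: x0 i (mem_index_enum _).
Qed.

Lemma lin2C a z : lin2 a z = lin2 z a.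
Proof. by rewrite /lin2 dotvC mulrC. Qed.

Lemma lin2Dr a z w : lin2 a (z + w) = lin2 a z + lin2 a w.
Proof. rewrite /lin2 /= dotvDr; ring. Qed.

Lemma lin2Zr a z t : lin2 a (t *: z) = t * lin2 a z.
Proof. rewrite /lin2 /= dotvZr [t *: z.2]/(GRing.scale _ _) /=; ring. Qed.

Lemma lin2Nr a z : lin2 a (- z) = - lin2 a z.
Proof. rewrite /lin2 /= dotvNr; ring. Qed.

Lemma lin2Br a z w : lin2 a (z - w) = lin2 a z - lin2 a w.
Proof. by rewrite lin2Dr lin2Nr. Qed.

Lemma lin2Nl a z : lin2 (- a) z = - lin2 a z.
Proof. by rewrite lin2C lin2Nr lin2C. Qed.

Lemma lin2Bl a z w : lin2 (z - w) a = lin2 z a - lin2 w a.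
Proof. by rewrite lin2C lin2Br !(lin2C a). Qed.

Lemma lin2Zl a z t : lin2 (t *: z) a = t * lin2 z a.
Proof. by rewrite lin2C lin2Zr lin2C. Qed.

Lemma lin2_ge0 a : 0 <= lin2 a a.
Proof. by rewrite /lin2 addr_ge0 ?dotv_ge0 // -expr2 sqr_ge0. Qed.

Lemma lin2_eq0 a : lin2 a a = 0 -> a = 0.
Proof.
case: a => a1 a2; rewrite /lin2 /= => /eqP.
rewrite paddr_eq0 ?dotv_ge0 -?expr2 ?sqr_ge0 // => /andP[/eqP/dotv_eq0 -> ].
by rewrite sqrf_eq0 => /eqP ->.
Qed.

Lemma lin2_vshift a z t : lin2 a (z.1, z.2 + t) = lin2 a z + a.2 * t.
Proof. rewrite /lin2 /=; ring. Qed.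

End InnerProduct.

Section Separation.
Variables (R : realType) (n : nat).
Implicit Types (p q z : 'rV[R]_n * R) (C : set ('rV[R]_n * R)).

Definition sqdist p z : R :=
  \sum_(i < n) (p.1 ord0 i - z.1 ord0 i) ^+ 2 + (p.2 - z.2) ^+ 2.

Lemma sqdistE p z : sqdist p z = lin2 (p - z) (p - z).
Proof.
rewrite /sqdist /lin2 /dotv /= -[(p.2 - z.2) * _]expr2; congr (_ + _).
by apply: eq_bigr => i _; rewrite !mxE expr2.
Qed.

Lemma continuous_sqdist p : continuous (sqdist p).
Proof.
have add (g h : 'rV[R]_n * R -> R) : continuous g -> continuous h ->
    continuous (fun z => g z + h z).
  by move=> gc hc z; apply: (@cvgD _ _ _ _ _ g h); [exact: gc|exact: hc].
have sub_sq (c : R) (g : 'rV[R]_n * R -> R) : continuous g ->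
    continuous (fun z => (c - g z) ^+ 2).
  move=> gc z; rewrite (_ : (fun _ => _) = (fun z => c - g z) \* (fun z => c - g z)).
    have cvg_cg : (fun z => c - g z) @ z --> c - g z.
      by apply: (@cvgB _ _ _ _ _ (fun=> c) g); [exact: cvg_cst|exact: gc].
    exact: (cvgM cvg_cg cvg_cg).
  by apply/funext => y; rewrite expr2.
apply: add; last by apply: sub_sq => z; exact: cvg_snd.
apply: (@continuous_big R _ +%R 0 xpredT add_continuous) => i _.
apply: sub_sq => z.
apply: (@continuous_comp _ _ _ fst (fun M : 'rV[R]_n => M ord0 i) z).
  exact: cvg_fst.
exact: coord_continuous.
Qed.

Lemma norm_le_sqr_add1 (x N : R) : x ^+ 2 <= N -> `|x| <= N + 1.
Proof. by move=> xN; rewrite ler_norml; apply/andP; split; nra. Qed.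

Lemma sqdist_coord_le p z i : `|p.1 ord0 i - z.1 ord0 i| <= sqdist p z + 1.
Proof.
apply: norm_le_sqr_add1.
rewrite /sqdist (bigD1 i) //= -addrA lerDl addr_ge0 ?sqr_ge0 //.
by apply: sumr_ge0 => j _; exact: sqr_ge0.
Qed.

Lemma sqdist_last_le p z : `|p.2 - z.2| <= sqdist p z + 1.
Proof.
apply: norm_le_sqr_add1.
by rewrite /sqdist lerDr; apply: sumr_ge0 => j _; exact: sqr_ge0.
Qed.

Lemma sqdist_sublevel_compact p r :
  exists2 B, compact B & forall z, sqdist p z <= r -> B z.
Proof.
pose I (c : R) := `[c - (r + 1), c + (r + 1)]%classic.
exists ([set v : 'rV[R]_n | forall i, I (p.1 ord0 i) (v ord0 i)] `*` I p.2).
  apply: compact_setX; last exact: segment_compact.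
  by apply: (@rV_compact _ _ (fun i => I (p.1 ord0 i))) => i; exact: segment_compact.
move=> z zr; split => [i|] /=; rewrite /I /= in_itv /=.
  have := sqdist_coord_le p z i; rewrite ler_norml => /andP[? ?].
  by apply/andP; split; lra.
have := sqdist_last_le p z; rewrite ler_norml => /andP[? ?].
by apply/andP; split; lra.
Qed.

Lemma exists_nearest_point C p : closed C -> C !=set0 ->
  exists2 q, C q & forall z, C z -> sqdist p q <= sqdist p z.
Proof.
move=> Ccl [z0 Cz0].
have [B Bc Bsub] := sqdist_sublevel_compact p (sqdist p z0).
have BC0 : B `&` C !=set0 by exists z0; split => //; exact: Bsub.
have [q] := compact_EVT_min BC0 (compact_closedI Bc Ccl)
  (continuous_subspaceT (@continuous_sqdist p)).
rewrite inE => -[_ Cq] qmin; exists q => // z Cz.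
have [zz0|z0z] := leP (sqdist p z) (sqdist p z0).
  by apply: qmin; rewrite inE; split => //; exact: Bsub.
by apply: le_trans (ltW z0z); apply: qmin; rewrite inE; split => //; exact: Bsub.
Qed.

(* If the angle at [q] were acute, moving from [q] a little towards [z] would
   bring us closer to [p]. *)
Lemma nearest_point_obtuse C p q : convex_set2 C -> C q ->
  (forall z, C z -> sqdist p q <= sqdist p z) ->
  forall z, C z -> lin2 (p - q) (z - q) <= 0.
Proof.
move=> Ccv Cq qmin z Cz; set a := p - q; set d := z - q.
rewrite leNgt; apply/negP => ad_gt0.
have dd_ge0 := lin2_ge0 d.
pose t := lin2 a d / (lin2 a d + lin2 d d).
have den_gt0 : 0 < lin2 a d + lin2 d d by lra.
have t_gt0 : 0 < t by rewrite divr_gt0.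
have t_le1 : t <= 1 by rewrite ler_pdivrMr // mul1r lerDl.
have := qmin _ (Ccv z q t Cz Cq (introT andP (conj (ltW t_gt0) t_le1))).
have -> : ((t *: z.1 + (1 - t) *: q.1, t * z.2 + (1 - t) * q.2) : 'rV[R]_n * R)
    = q + t *: d.
  rewrite /d; apply/pair_equal_spec; split => /=.
    by rewrite scalerBr scalerBl scale1r addrCA addrA.
  rewrite [t *: _]/(GRing.scale _ _) /=; ring.
rewrite !sqdistE (_ : p - (q + t *: d) = a - t *: d); last by rewrite opprD addrA.
rewrite (lin2Bl (a - t *: d) a (t *: d)) (lin2Br a a (t *: d)).
rewrite (lin2Br (t *: d) a (t *: d)) !lin2Zl !lin2Zr (lin2C d a) => closer.
have ht : t * (lin2 a d + lin2 d d) = lin2 a d.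
  by rewrite /t mulrAC -mulrA divff ?mulr1 // gt_eqF.
nra.
Qed.

Lemma separation C p : closed C -> convex_set2 C -> C !=set0 -> ~ C p ->
  exists a b, (forall z, C z -> lin2 a z <= b) /\ b < lin2 a p.
Proof.
move=> Ccl Ccv C0 nCp.
have [q Cq qmin] := exists_nearest_point p Ccl C0.
exists (p - q), (lin2 (p - q) q); split.
  by move=> z Cz; have := nearest_point_obtuse Ccv Cq qmin Cz; rewrite lin2Br; lra.
have : 0 < lin2 (p - q) (p - q).
  rewrite lt_def lin2_ge0 andbT; apply/negP => /eqP /lin2_eq0 /eqP.
  by rewrite subr_eq0 => /eqP pq; apply: nCp; rewrite pq.
rewrite [X in lin2 _ X]/= lin2Br; lra.
Qed.

End Separation.

Section RelativeInteriorPoint.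
Variables (R : realType) (n : nat).
Implicit Types (D : set 'rV[R]_n) (x v : 'rV[R]_n) (s : seq 'rV[R]_n).

Definition midpoint_closed D : Prop :=
  forall a b, D a -> D b -> D (2^-1 *: a + 2^-1 *: b).

Lemma exists_affine_spanning_seq D v0 : exists2 s, {in s, forall x, D x} &
  forall v, D v -> v - v0 \in <<[seq x - v0 | x <- s]>>%VS.
Proof.
pose P k := exists2 s, {in s, forall x, D x} & \dim <<[seq x - v0 | x <- s]>> = k.
have P0 : exists k, `[< P k >].
  by exists 0%N; apply/asboolP; exists [::] => //; rewrite span_nil dimv0.
have Pn k : `[< P k >] -> (k <= 1 * n)%N.
  move=> /asboolP [s _ <-]; apply: leq_trans (dimvS (subvf _)) _.
  by rewrite dimvf /dim.
have [k /asboolP [s sD sk] kmax] := ex_maxnP P0 Pn.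
exists s => // v Dv.
have sub : (<<[seq x - v0 | x <- s]>> <= <<[seq x - v0 | x <- v :: s]>>)%VS.
  by rewrite /= span_cons addvSr.
have /eqP -> : (<<[seq x - v0 | x <- s]>> == <<[seq x - v0 | x <- v :: s]>>)%VS.
  rewrite eqEdim sub /= sk; apply: kmax; apply/asboolP; exists (v :: s) => //.
  by move=> x; rewrite inE => /orP [/eqP -> //| /sD].
by apply: memv_span; exact: mem_head.
Qed.

Fixpoint iter_midpoint x0 s : 'rV[R]_n :=
  if s is y :: s' then 2^-1 *: y + 2^-1 *: iter_midpoint x0 s' else x0.

Section IterMidpoint.
Variables (D : set 'rV[R]_n) (x0 : 'rV[R]_n).
Hypotheses (Dmid : midpoint_closed D) (Dx0 : D x0).

Lemma iter_midpoint_in s : {in s, forall x, D x} -> D (iter_midpoint x0 s).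
Proof.
elim: s => [//|y s IH] /= sD; apply: Dmid; first by apply: sD; exact: mem_head.
by apply: IH => x xs; apply: sD; rewrite inE xs orbT.
Qed.

Lemma iter_midpoint_argmin d m s : {in s, forall x, D x} ->
  (forall v, D v -> m <= dotv d v) -> dotv d (iter_midpoint x0 s) = m ->
  dotv d x0 = m /\ {in s, forall x, dotv d x = m}.
Proof.
move=> + dmin; elim: s => [//|y s IH] /= sD.
have Dy : D y by apply: sD; exact: mem_head.
have sD' : {in s, forall x, D x} by move=> x xs; apply: sD; rewrite inE xs orbT.
rewrite dotvDr !dotvZr => mid_m.
have := dmin _ Dy; have := dmin _ (iter_midpoint_in sD') => ? ?.
have [dx0 ds] : dotv d x0 = m /\ {in s, forall x, dotv d x = m} by apply: IH => //; lra.
by split => // x; rewrite inE => /orP [/eqP -> | /ds //]; lra.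
Qed.

End IterMidpoint.

(* [u] plays the role of a relative interior point: a supporting hyperplane
   of [D] through [u] contains all of [D].  It is an iterated midpoint of
   points of [D] affinely spanning [D]. *)
Lemma exists_relint_point D : midpoint_closed D -> D !=set0 ->
  exists u, D u /\ forall d m, (forall v, D v -> m <= dotv d v) ->
    dotv d u = m -> forall v, D v -> dotv d v = m.
Proof.
move=> Dmid [v0 Dv0]; have [s sD span_s] := exists_affine_spanning_seq D v0.
exists (iter_midpoint v0 s); split; first exact: iter_midpoint_in.
move=> d m dmin /(iter_midpoint_argmin Dmid Dv0 sD dmin) [dv0 ds] v Dv.
have := @coord_span _ _ _ (in_tuple [seq x - v0 | x <- s]) _ (span_s v Dv).
move=> /(congr1 (dotv d)).
rewrite dotv_sumr big1 ?dotvBr ?dv0; first by move/eqP; rewrite subr_eq0 => /eqP.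
move=> i _; rewrite dotvZr.
have /mapP [x xs ->] : (in_tuple [seq x - v0 | x <- s])`_i \in [seq x - v0 | x <- s].
  exact/mem_nth/ltn_ord.
by rewrite dotvBr ds // dv0 subrr mulr0.
Qed.

End RelativeInteriorPoint.

Section ExposedFacesOfEpigraphs.
Variables (R : realType) (n : nat).
Implicit Types (g : 'rV[R]_n -> \bar R) (u : 'rV[R]_n) (a z : 'rV[R]_n * R).
Local Notation K := (@coneK R n).

Definition affine_minorant g u c : Prop := forall y, ((dotv u y - c)%:E <= g y)%E.

Definition contact_set g u c : set ('rV[R]_n * R) :=
  [set z | g z.1 = z.2%:E /\ dotv u z.1 - z.2 = c].

Lemma coneK_strictP k : (K `\` [set - k | k in K]) k -> k.1 = 0 /\ 0 < k.2.
Proof.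
case=> [[k1 k2]] nk; split => //; rewrite lt_def k2 andbT.
apply/negP => /eqP k20; apply: nk; exists k; first by [].
by case: k k1 k2 k20 => a b /= -> _ ->; rewrite !oppr0.
Qed.

Lemma coneK_strict01 : (K `\` [set - k | k in K]) (0, 1).
Proof.
split; first by split => //=; exact: ler01.
move=> [k [_ k2]] /pair_equal_spec [_ k2N1].
by move: k2; rewrite -[k.2]opprK k2N1 ler0N1.
Qed.

Lemma epi_up g z t : epi g z -> 0 <= t -> epi g (z.1, z.2 + t).
Proof. by move=> gz t0; apply: le_trans gz _; rewrite lee_fin lerDl. Qed.

Lemma epi_halfspace_normal_le0 g a b z0 : epi g z0 ->
  (forall z, epi g z -> lin2 a z <= b) -> a.2 <= 0.
Proof.
move=> gz0 below; rewrite leNgt; apply/negP => a2_gt0.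
pose t := (`|b - lin2 a z0| + 1) / a.2.
have t_ge0 : 0 <= t by rewrite divr_ge0 ?ltW // addr_ge0.
have := below _ (epi_up gz0 t_ge0).
rewrite lin2_vshift /t mulrCA divff ?gt_eqF // mulr1.
have := ler_norm (b - lin2 a z0); lra.
Qed.

Lemma contact_set_exposed g u c : affine_minorant g u c ->
  contact_set g u c !=set0 -> exposed_face (epi g) (contact_set g u c).
Proof.
move=> minor [z0 [gz0 cz0]].
have lin2E z : lin2 (u, -1) z = dotv u z.1 - z.2 by rewrite /lin2 /= mulN1r.
exists [set z | lin2 (u, -1) z = c]; split.
  exists (u, -1), c; split.
    by apply/negP => /eqP /pair_equal_spec [_] /eqP; rewrite oppr_eq0 oner_eq0.
  split => //; split.
    by exists z0; split; [rewrite /epi /= gz0 | rewrite /= lin2E].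
  left => z gz; have := le_trans (minor z.1) gz; rewrite lee_fin lin2E; lra.
apply/seteqP; split => z.
  by move=> [gz cz]; split; [rewrite /epi /= gz | rewrite /= lin2E].
move=> [gz]; rewrite /= lin2E => cz; split => //.
by apply/le_anti; rewrite gz /=; have := minor z.1; rewrite -cz opprB addrCA subrr addr0.
Qed.

Lemma contact_set_K_minimal g u c : affine_minorant g u c ->
  K_minimal_face K (epi g) (contact_set g u c).
Proof.
move=> minor p [gp cp]; split; first by rewrite /epi /= gp.
apply/seteqP; split => // _ [[k Kk <-]]; rewrite /epi /=.
have [k1 k2] := coneK_strictP Kk.
have := minor p.1; rewrite k1 subr0 gp !lee_fin; lra.
Qed.

Lemma contact_set_K_min_exposed g u c : affine_minorant g u c ->
  contact_set g u c !=set0 -> K_min_exposed_faces (epi g) (contact_set g u c).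
Proof.
by move=> minor S0; split; [exact: contact_set_exposed | exact: contact_set_K_minimal].
Qed.

Lemma exposed_face_below (A F : set ('rV[R]_n * R)) : exposed_face A F ->
  exists a b, [/\ F = A `&` [set z | lin2 a z = b],
    forall z, A z -> lin2 a z <= b & F !=set0].
Proof.
move=> [H [[a [b [_ [-> [AH0 [below|above]]]]]] ->]].
  by exists a, b; split.
exists (- a), (- b); split => //; last by move=> z /above; rewrite lin2Nl lerN2.
apply/seteqP; split => z [Az Hz]; split => //=.
  by rewrite lin2Nl Hz.
by move: Hz; rewrite /= lin2Nl => /oppr_inj.
Qed.

(* K-minimality rules out vertical supporting hyperplanes, and a non-vertical
   one is the graph of an affine minorant. *)
Lemma K_min_exposed_contact_set g F : (forall x, g x != -oo%E) ->
  K_min_exposed_faces (epi g) F ->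
  exists u c, [/\ affine_minorant g u c, F = contact_set g u c & F !=set0].
Proof.
move=> gNy [/exposed_face_below [a [b [FE below F0]]] Kmin].
have [p Fp] := F0; have [gp ap] : epi g p /\ lin2 a p = b by rewrite FE in Fp.
have a2_lt0 : a.2 < 0.
  rewrite lt_def (epi_halfspace_normal_le0 gp below) andbT.
  apply/negP => /eqP a20; pose p' := (p.1, p.2 + 1).
  have Fp' : F p'.
    by rewrite FE; split; [exact: epi_up | rewrite /= lin2_vshift -a20 mul0r addr0].
  have [_ /seteqP[below_p' _]] := Kmin _ Fp'; apply: (below_p' p); split => //.
  exists (0, 1); first exact: coneK_strict01.
  by rewrite [RHS]surjective_pairing; apply/pair_equal_spec; rewrite /= subr0 addrK.
pose c0 := - a.2; have c0_gt0 : 0 < c0 by rewrite oppr_gt0.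
have scaled z : dotv (c0^-1 *: a.1) z.1 - z.2 = lin2 a z / c0.
  rewrite dotvZl /lin2 /c0; field; exact: ltr0_neq0.
have minor : affine_minorant g (c0^-1 *: a.1) (b / c0).
  move=> y; case gy: (g y) => [s| |]; last by move: (gNy y); rewrite gy.
    have := scaled (y, s); have : lin2 a (y, s) / c0 <= b / c0.
      by rewrite ler_pM2r ?invr_gt0 // below // /epi /= gy.
    rewrite lee_fin /=; lra.
  exact: leey.
exists (c0^-1 *: a.1), (b / c0); split => //.
rewrite FE; apply/seteqP; split => z.
  move=> [gz az]; have cz := scaled z; rewrite az in cz; split => //.
  by apply/le_anti; rewrite gz /=; have := minor z.1; rewrite -cz opprB addrCA subrr addr0.
move=> [gz cz]; split; first by rewrite /epi /= gz.
have := scaled z; rewrite cz => /(congr1 ( *%R^~ c0)).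
by rewrite /= !divfK ?gt_eqF.
Qed.

End ExposedFacesOfEpigraphs.

Section Conjugate.
Variables (R : realType) (n : nat).
Implicit Types (g : 'rV[R]_n -> \bar R) (x u v : 'rV[R]_n) (a z : 'rV[R]_n * R).
Local Open Scope ereal_scope.

Lemma le_conj_fun g x v : (dotv x v)%:E - g x <= conj_fun g v.
Proof. by apply: ereal_sup_ubound; exists x. Qed.

Lemma conj_fun_le g v c :
  (forall x, (dotv x v)%:E - g x <= c) -> conj_fun g v <= c.
Proof. by move=> h; apply: ge_ereal_sup => _ [x _ <-]; exact: h. Qed.

Lemma subdiff_conjP g x v :
  subdiff g x v <-> exists r, g x = r%:E /\ conj_fun g v = (dotv x v - r)%:E.
Proof.
split.
  move=> [gx sub]; exists (fine (g x)); split; first by rewrite fineK.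
  apply/le_anti; apply/andP; split; last by have := le_conj_fun g x v; rewrite -{1}(fineK gx).
  apply: conj_fun_le => y; have := sub y; rewrite -(fineK gx).
  case: (g y) => [s| |] //=; last by move=> _; rewrite addeNy leNye.
  rewrite -?EFinN -!EFinD !lee_fin dotvBr (dotvC x v) (dotvC y v); lra.
move=> [r [gx gv]]; split; first by rewrite gx.
move=> y; have := le_conj_fun g y v; rewrite gv gx.
case: (g y) => [s| |] //=; last by move=> _; rewrite leey.
rewrite -?EFinN -!EFinD !lee_fin dotvBr (dotvC x v) (dotvC y v); lra.
Qed.

Lemma conj_fun_le_halfspace g a b : (forall x, g x != -oo) -> (a.2 < 0)%R ->
  (forall z, epi g z -> (lin2 a z <= b)%R) ->
  conj_fun g ((- a.2)^-1 *: a.1) <= (b / - a.2)%:E.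
Proof.
move=> gNy a2_lt0 below; set c0 := (- a.2)%R.
have c0_gt0 : (0 < c0)%R by rewrite oppr_gt0.
apply: conj_fun_le => x; case gx: (g x) => [s| |]; last by move: (gNy x); rewrite gx.
  have scaled : (dotv x (c0^-1 *: a.1) - s = lin2 a (x, s) / c0)%R.
    by rewrite dotvZr /lin2 /= (dotvC x) /c0; field; exact: ltr0_neq0.
  rewrite -EFinB lee_fin scaled ler_pM2r ?invr_gt0 //.
  by apply: below; rewrite /epi /= gx.
by rewrite addeNy leNye.
Qed.

Lemma conj_fun_le_vertical_halfspace g a b u r : a.2 = 0%R ->
  (forall z, epi g z -> (lin2 a z <= b)%R) -> conj_fun g u = r%:E ->
  conj_fun g (u + a.1) <= (r + b)%:E.
Proof.
move=> a20 below gu; apply: conj_fun_le => x.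
have := le_conj_fun g x u; rewrite gu.
case gx: (g x) => [s| |].
- have := below (x, s); rewrite /lin2 /= a20 mul0r addr0 /epi /= gx lexx => /(_ isT).
  by rewrite -!EFinB !lee_fin dotvDr (dotvC x a.1); lra.
- by move=> _; rewrite addeNy leNye.
- by rewrite /= addey.
Qed.

Lemma subdiff_fin_num g x v : subdiff g x v ->
  g x \is a fin_num /\ conj_fun g v \is a fin_num.
Proof. by move=> /subdiff_conjP [r [-> ->]]. Qed.

Definition subgrad_face g u : set ('rV[R]_n * R) :=
  [set z | z.2%:E = g z.1 /\ subdiff g z.1 u].

Definition conj_subgrad_face g x : set ('rV[R]_n * R) :=
  [set w | w.2%:E = conj_fun g w.1 /\ subdiff g x w.1].

Lemma contact_set_subgrad_face g u c : affine_minorant g u c ->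
  contact_set g u c !=set0 -> contact_set g u c = subgrad_face g u.
Proof.
move=> minor [[x1 r1] [/= gx1 c1]]; apply/seteqP; split => z.
  move=> [gz cz]; split => //; apply/subdiff_conjP; exists z.2; split => //.
  apply/le_anti; apply/andP; split; last by have := le_conj_fun g z.1 u; rewrite gz -EFinB.
  apply: conj_fun_le => y; have := minor y.
  case: (g y) => [s| |] //=; last by move=> _; rewrite addeNy leNye.
  rewrite -EFinB !lee_fin (dotvC y u) (dotvC z.1 u); lra.
move=> [gz /subdiff_conjP [s [gz' gu]]].
have s_eq : s = z.2 by move: gz'; rewrite -gz => -[].
rewrite {}s_eq in gu.
split => //=; have := le_conj_fun g x1 u; rewrite gu gx1 -EFinB lee_fin.
have := minor z.1; rewrite -gz lee_fin (dotvC x1 u) (dotvC z.1 u); lra.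
Qed.

Lemma contact_set_conj g x0 c : g x0 = c%:E ->
  contact_set (conj_fun g) x0 c = conj_subgrad_face g x0.
Proof.
move=> gx0; apply/seteqP; split => w.
  move=> [gw cw]; split => //; apply/subdiff_conjP; exists c; split => //.
  by rewrite gw -cw; congr (_%:E); ring.
move=> [gw /subdiff_conjP [s [gx0' gs]]].
have s_eq : s = c by move: gx0'; rewrite gx0 => -[].
rewrite {}s_eq in gs.
by split => //=; move: gs; rewrite -gw => -[->]; ring.
Qed.

Lemma subgrad_face_K_min_exposed g u x1 : subdiff g x1 u ->
  K_min_exposed_faces (epi g) (subgrad_face g u).
Proof.
move=> gx1u; have [r1 [gx1 _]] := (subdiff_conjP g x1 u).1 gx1u.
have minor : affine_minorant g u (dotv u x1 - r1).
  move=> y; case: gx1u => _ /(_ y); rewrite gx1 dotvBr -EFinD.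
  by congr (_ <= _); congr (_%:E); ring.
have S0 : contact_set g u (dotv u x1 - r1) !=set0 by exists (x1, r1).
by rewrite -(contact_set_subgrad_face minor S0); exact: contact_set_K_min_exposed.
Qed.

Lemma conj_subgrad_face_K_min_exposed g x0 v0 : subdiff g x0 v0 ->
  K_min_exposed_faces (epi (conj_fun g)) (conj_subgrad_face g x0).
Proof.
move=> /subdiff_conjP [c [gx0 gv0]]; rewrite -(contact_set_conj gx0).
apply: contact_set_K_min_exposed; first by move=> v; have := le_conj_fun g x0 v; rewrite gx0.
by exists (v0, dotv x0 v0 - c)%R; split => /=; [exact: gv0 | ring].
Qed.

Lemma K_min_exposed_subgrad_face g F : (forall x, g x != -oo) ->
  K_min_exposed_faces (epi g) F -> exists u, F = subgrad_face g u /\ F !=set0.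
Proof.
move=> gNy /(K_min_exposed_contact_set gNy) [u [c [minor -> S0]]].
by exists u; split => //; exact: contact_set_subgrad_face.
Qed.

End Conjugate.

Section Subgradients.
Variables (R : realType) (n : nat).
Implicit Types (g : 'rV[R]_n -> \bar R) (x u v : 'rV[R]_n).
Local Open Scope ereal_scope.

Lemma ge_of_conj_contact g x0 c : contact_set (conj_fun g) x0 c !=set0 -> c%:E <= g x0.
Proof.
move=> [[u r] [/= gu cu]]; case gx0: (g x0) => [s| |]; last 2 first.
- exact: leey.
- by have := le_conj_fun g x0 u; rewrite gx0 gu.
by have := le_conj_fun g x0 u; rewrite gx0 gu -EFinB !lee_fin; lra.
Qed.

Lemma subdiff_midpoint_closed g x0 : midpoint_closed [set v | subdiff g x0 v].
Proof.
move=> a b [gx0 ha] [_ hb]; split => // y.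
have := ha y; have := hb y; rewrite -(fineK gx0).
case: (g y) => [s| |] //=; last by move=> _ _; rewrite leey.
rewrite -!EFinD !lee_fin dotvDl !dotvZl; lra.
Qed.

Lemma relint_subgradient g x0 v0 : subdiff g x0 v0 -> exists u, subdiff g x0 u /\
  forall x, subdiff g x u -> forall v, subdiff g x0 v -> subdiff g x v.
Proof.
move=> gx0v0.
have [u [gx0u relint]] := exists_relint_point (@subdiff_midpoint_closed g x0)
  (ex_intro _ v0 gx0v0).
exists u; split => // x /subdiff_conjP [s [gx gu]] v gx0v.
have [c [gx0 gu0]] := (subdiff_conjP g x0 u).1 gx0u.
have conjE w : subdiff g x0 w -> conj_fun g w = (dotv x0 w - c)%:E.
  by move=> /subdiff_conjP [c' [gx0' gw]]; move: gx0'; rewrite gx0 gw => -[->].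
have dmin w : subdiff g x0 w -> (c - s <= dotv (x0 - x) w)%R.
  move=> gx0w; have := le_conj_fun g x w.
  by rewrite conjE // gx -EFinB lee_fin dotvBl; lra.
have du : dotv (x0 - x) u = (c - s)%R by move: gu; rewrite gu0 dotvBl => -[]; lra.
have := relint _ _ dmin du v gx0v; rewrite dotvBl => dv.
by apply/subdiff_conjP; exists s; split => //; rewrite conjE //; congr (_%:E); lra.
Qed.

Lemma Psi_graph g (D : set 'rV[R]_n) Fs :
  (forall v, D v -> conj_fun g v \is a fin_num) ->
  Fs = [set w | w.2%:E = conj_fun g w.1 /\ D w.1] -> Fs !=set0 ->
  Psi g Fs = [set z | z.2%:E = g z.1 /\ forall v, D v -> subdiff g z.1 v].
Proof.
move=> Dfin -> [w0 [w0_graph Dw0]]; apply/seteqP; split => z; last first.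
  by move=> [gz zD] w [_ Dw] _; split => //; exact: zD.
move=> PSz; split; first by case: (PSz w0).
move=> v Dv; have := PSz (v, fine (conj_fun g v)); rewrite /= fineK ?Dfin //.
by move=> /(_ (conj erefl Dv) erefl) [].
Qed.

Lemma Psi_star_graph g (E : set 'rV[R]_n) F :
  (forall x, E x -> g x \is a fin_num) ->
  F = [set z | z.2%:E = g z.1 /\ E z.1] -> F !=set0 ->
  Psi_star g F = [set w | w.2%:E = conj_fun g w.1 /\ forall x, E x -> subdiff g x w.1].
Proof.
move=> Efin -> [z0 [z0_graph Ez0]]; apply/seteqP; split => w; last first.
  by move=> [gw wE] z [_ Ez] _; split => //; exact: wE.
move=> PSw; split; first by case: (PSw z0).
move=> x Ex; have := PSw (x, fine (g x)); rewrite /= fineK ?Efin //.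
by move=> /(_ (conj erefl Ex) erefl) [].
Qed.

Lemma Psi_antitone g Fs1 Fs2 : Fs1 `<=` Fs2 -> Psi g Fs2 `<=` Psi g Fs1.
Proof. by move=> sub12 z Fz w Fw; apply: Fz; exact: sub12. Qed.

Lemma Psi_star_antitone g F1 F2 : F1 `<=` F2 -> Psi_star g F2 `<=` Psi_star g F1.
Proof. by move=> sub12 w Fw z Fz; apply: Fw; exact: sub12. Qed.

End Subgradients.

Section ClosedProperConvex.
Variables (R : realType) (n : nat) (f : 'rV[R]_n -> \bar R).
Hypotheses (f_proper : proper_fun f) (f_closed : closed_fun f) (f_convex : convex_fun f).
Implicit Types (x u v : 'rV[R]_n).
Local Notation fs := (conj_fun f).
Local Open Scope ereal_scope.

Lemma f_neqNy x : f x != -oo.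
Proof. by case: f_proper. Qed.

Lemma f_finite_somewhere : exists x r, f x = r%:E.
Proof.
case: f_proper => fNy [x fx]; exists x, (fine (f x)).
by rewrite fineK // fin_numE fNy lt_eqF.
Qed.

(* This is [f^** (x0) >= f x0]: otherwise [(x0, c)] is strictly separated
   from the closed convex set [epi f], and both a vertical and a non-vertical
   separating hyperplane contradict the minorant. *)
Lemma f_le_of_conj_minorant x0 c : affine_minorant fs x0 c ->
  contact_set fs x0 c !=set0 -> f x0 <= c%:E.
Proof.
move=> minor [[u r] [/= fsu cu]]; rewrite leNgt; apply/negP => c_lt.
have x0c_epi : ~ epi f (x0, c) by rewrite /epi /= => le; move: c_lt; rewrite ltNge le.
have [xe [re fxe]] := f_finite_somewhere.
have epi_e : epi f (xe, re) by rewrite /epi /= fxe.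
have [a [b [below above]]] := separation f_closed f_convex (ex_intro _ _ epi_e) x0c_epi.
have [a2_lt0|a2_ge0] := ltP a.2 0%R.
  have := le_trans (minor _) (conj_fun_le_halfspace f_neqNy a2_lt0 below).
  rewrite lee_fin dotvZr.
  have -> : ((- a.2)^-1 * dotv x0 a.1 - c = lin2 a (x0, c) / - a.2)%R.
    by rewrite /lin2 /= (dotvC x0); field; exact: ltr0_neq0.
  rewrite ler_pM2r ?invr_gt0 ?oppr_gt0 //; lra.
have a20 : a.2 = 0%R by apply/le_anti; rewrite a2_ge0 (epi_halfspace_normal_le0 epi_e below).
have := le_trans (minor _) (conj_fun_le_vertical_halfspace a20 below fsu).
by rewrite lee_fin dotvDr; move: above; rewrite /lin2 /= a20 mul0r addr0 (dotvC x0 a.1); lra.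
Qed.

Lemma K_min_exposed_conj_subgrad_face Fs : K_min_exposed_faces (epi fs) Fs ->
  exists x0, Fs = conj_subgrad_face f x0 /\ Fs !=set0.
Proof.
have fsNy v : fs v != -oo.
  have [x [r fx]] := f_finite_somewhere.
  by have := le_conj_fun f x v; rewrite fx -EFinB; case: (fs v).
move=> /(K_min_exposed_contact_set fsNy) [x0 [c [minor -> S0]]].
have fx0 : f x0 = c%:E.
  by apply/le_anti; rewrite f_le_of_conj_minorant //; exact: ge_of_conj_contact.
by exists x0; split => //; exact: contact_set_conj.
Qed.

Lemma subdiff_point_midpoint_closed u : midpoint_closed [set x | subdiff f x u].
Proof.
move=> a b /subdiff_conjP [sa [fa ua]] /subdiff_conjP [sb [fb ub]].
set m := (2^-1 *: a + 2^-1 *: b)%R.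
have sbE : sb = (dotv b u - dotv a u + sa)%R by move: ua; rewrite ub => -[]; lra.
have half : ((0 <= 2^-1 :> R) && (2^-1 <= 1 :> R))%R.
  by rewrite invr_ge0 invf_le1 ?ler0n ?ler1n.
have epi_a : epi f (a, sa) by rewrite /epi /= fa.
have epi_b : epi f (b, sb) by rewrite /epi /= fb.
have := f_convex epi_a epi_b half; rewrite /epi /=.
rewrite (_ : 1 - 2^-1 = 2^-1 :> R)%R -/m; last by field.
have := le_conj_fun f m u; rewrite ua => fs_ge fm_le.
have fmE : f m = (dotv m u - (dotv a u - sa))%:E.
  apply/le_anti; apply/andP; split.
    by apply: le_trans fm_le _; rewrite lee_fin /m dotvDl !dotvZl; lra.
  case fmE: (f m) fs_ge => [s| |]; last by move: (f_neqNy m); rewrite fmE.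
    by rewrite -EFinB !lee_fin => ?; lra.
  by rewrite leey.
apply/subdiff_conjP; exists (dotv m u - (dotv a u - sa))%R; split => //.
by rewrite ua; congr (_%:E); ring.
Qed.

Lemma relint_subdiff_point u x1 : subdiff f x1 u -> exists x0, subdiff f x0 u /\
  forall v, subdiff f x0 v -> forall x, subdiff f x u -> subdiff f x v.
Proof.
move=> fx1u.
have [x0 [fx0u relint]] := exists_relint_point (@subdiff_point_midpoint_closed u)
  (ex_intro _ x1 fx1u).
exists x0; split => // v /subdiff_conjP [s0 [fx0 fsv]].
have [s0' [fx0' fsu]] := (subdiff_conjP f x0 u).1 fx0u.
have s0E : s0' = s0 by move: fx0'; rewrite fx0 => -[].
rewrite {}s0E in fsu.
have graphE x : subdiff f x u -> exists s, f x = s%:E /\ (dotv x u - s = dotv x0 u - s0)%R.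
  by move=> /subdiff_conjP [s [fx fsu']]; exists s; split => //; move: fsu'; rewrite fsu => -[].
have dmin x : subdiff f x u -> (dotv (u - v) x0 <= dotv (u - v) x)%R.
  move=> /graphE [s [fx e]]; have := le_conj_fun f x v; rewrite fsv fx -EFinB lee_fin.
  by rewrite !dotvBl (dotvC u x) (dotvC v x) (dotvC u x0) (dotvC v x0); lra.
move=> x fxu; have [s [fx ex]] := graphE x fxu.
have := relint _ _ dmin erefl x fxu.
rewrite !dotvBl (dotvC u x) (dotvC v x) (dotvC u x0) (dotvC v x0) => ev.
by apply/subdiff_conjP; exists s; split => //; rewrite fsv; congr (_%:E); lra.
Qed.

Lemma Psi_K_min_exposed Fs : K_min_exposed_faces (epi fs) Fs ->
  K_min_exposed_faces (epi f) (Psi f Fs).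
Proof.
move=> /K_min_exposed_conj_subgrad_face [x0 [-> Fs0]].
have [[v0 r0] [_ /= fx0v0]] := Fs0.
have [u [fx0u relint]] := relint_subgradient fx0v0.
rewrite (@Psi_graph _ _ f (subdiff f x0) _ (fun v fx0v => (subdiff_fin_num fx0v).2) erefl Fs0).
rewrite (_ : [set z | _] = subgrad_face f u); first exact: subgrad_face_K_min_exposed fx0u.
apply/seteqP; split => z [zgraph zsub]; split => //; first exact: zsub.
by move=> v; exact: relint.
Qed.

Lemma Psi_star_K_min_exposed F : K_min_exposed_faces (epi f) F ->
  K_min_exposed_faces (epi fs) (Psi_star f F).
Proof.
move=> /(K_min_exposed_subgrad_face f_neqNy) [u [-> F0]].
have [[x1 r1] [_ /= fx1u]] := F0.
have [x0 [fx0u relint]] := relint_subdiff_point fx1u.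
rewrite (@Psi_star_graph _ _ f (subdiff f ^~ u) _
  (fun x fxu => (subdiff_fin_num fxu).1) erefl F0).
rewrite (_ : [set w | _] = conj_subgrad_face f x0).
  exact: conj_subgrad_face_K_min_exposed fx0u.
apply/seteqP; split => w [wgraph wsub]; split => //; first exact: wsub.
by move=> x; exact: relint.
Qed.

Lemma Psi_starK Fs : K_min_exposed_faces (epi fs) Fs -> Psi_star f (Psi f Fs) = Fs.
Proof.
move=> /K_min_exposed_conj_subgrad_face [x0 [-> Fs0]].
have [[v0 r0] [_ /= fx0v0]] := Fs0.
rewrite (@Psi_graph _ _ f (subdiff f x0) _ (fun v fx0v => (subdiff_fin_num fx0v).2) erefl Fs0).
rewrite (@Psi_star_graph _ _ f [set x | forall v, subdiff f x0 v -> subdiff f x v]) //.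
- apply/seteqP; split => w [wgraph wsub]; split => //; first exact: wsub.
  by move=> x; exact.
- by move=> x /= fx; exact: (subdiff_fin_num (fx _ fx0v0)).1.
- by exists (x0, fine (f x0)); split => //=; rewrite fineK // (subdiff_fin_num fx0v0).1.
Qed.

Lemma PsiK F : K_min_exposed_faces (epi f) F -> Psi f (Psi_star f F) = F.
Proof.
move=> /(K_min_exposed_subgrad_face f_neqNy) [u [-> F0]].
have [[x1 r1] [_ /= fx1u]] := F0.
rewrite (@Psi_star_graph _ _ f (subdiff f ^~ u) _
  (fun x fxu => (subdiff_fin_num fxu).1) erefl F0).
rewrite (@Psi_graph _ _ f [set v | forall x, subdiff f x u -> subdiff f x v]) //.
- apply/seteqP; split => z [zgraph zsub]; split => //; first exact: zsub.
  by move=> v; exact.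
- by move=> v /= fv; exact: (subdiff_fin_num (fv _ fx1u)).2.
- by exists (u, fine (fs u)); split => //=; rewrite fineK // (subdiff_fin_num fx1u).2.
Qed.

End ClosedProperConvex.

Unset Implicit Arguments.
Theorem theorem3p3 (R : realType) (n : nat) (f : 'rV[R]_n -> \bar R) :
  proper_fun f -> closed_fun f -> convex_fun f ->
  let FS := K_min_exposed_faces (epi (conj_fun f)) in
  let FF := K_min_exposed_faces (epi f) in
  (forall Fs, FS Fs -> FF (Psi f Fs)) /\
  (forall F, FF F -> FS (Psi_star f F)) /\
  (forall Fs, FS Fs -> Psi_star f (Psi f Fs) = Fs) /\
  (forall F, FF F -> Psi f (Psi_star f F) = F) /\
  (forall Fs1 Fs2, FS Fs1 -> FS Fs2 ->
     (Fs1 `<=` Fs2 <-> Psi f Fs2 `<=` Psi f Fs1)).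
Proof.
move=> f_proper f_closed f_convex FS FF.
have Psi_starK := Psi_starK f_proper f_closed f_convex.
split; first exact: Psi_K_min_exposed.
split; first exact: Psi_star_K_min_exposed.
split; first exact: Psi_starK.
split; first exact: PsiK.
move=> Fs1 Fs2 FS1 FS2; split; first exact: Psi_antitone.
by rewrite -{2}(Psi_starK _ FS1) -{2}(Psi_starK _ FS2); exact: Psi_star_antitone.
Qed.
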